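(* Let $(\mathcal C,\mathbb E,\mathfrak s)$ and $(\mathcal D,\mathbb F,\mathfrak t)$ be $n$-exangulated categories and $(\mathscr F,\Gamma)\colon(\mathcal C,\mathbb E,\mathfrak s)\to(\mathcal D,\mathbb F,\mathfrak t)$ an $n$-exangulated functor. Then $(\widetilde{\mathscr F},\widetilde\Gamma)$ is an $n$-exangulated functor $(\widetilde{\mathcal C},\widetilde{\mathbb E},\widetilde{\mathfrak s})\to(\widetilde{\mathcal D},\widetilde{\mathbb F},\widetilde{\mathfrak t})$.
   Context: $n\ge1$. An $n$-exangulated category $(\mathcal C,\mathbb E,\mathfrak s)$ (Herschend–Liu–Nakaoka) consists of an additive category $\mathcal C$, a biadditive functor $\mathbb E\colon\mathcal C^{\mathrm{op}}\times\mathcal C\to\mathsf{Ab}$, and an exact realisation $\mathfrak s$ assigning to each $\alpha\in\mathbb E(C,A)$ a homotopy class $[X_\bullet]$ of $(n+2)$-term complexes $X_0\to X_1\to\cdots\to X_{n+1}$ with $X_0=A$, $X_{n+1}=C$, satisfying axioms (EA1), (EA2), (EA2$^{\mathrm{op}}$). Write $a_*\alpha=\mathbb E(C,a)(\alpha)$ and $c^*\alpha=\mathbb E(c,A)(\alpha)$. A morphism of $\mathbb E$-extensions $\alpha\to\beta$ ($\alpha\in\mathbb E(C,A)$, $\beta\in\mathbb E(D,B)$) is a pair $(a\colon A\to B,c\colon C\to D)$ with $a_*\alpha=c^*\beta$. An $n$-exangulated functor $(\mathscr F,\Gamma)$ is an additive functor $\mathscr F\colon\mathcal C\to\mathcal D$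 with a natural transformation $\Gamma\colon\mathbb E(-,-)\Rightarrow\mathbb F(\mathscr F-,\mathscr F-)$ such that $\mathfrak s(\alpha)=[X_\bullet]$ implies $\mathfrak t(\Gamma(\alpha))=[\mathscr FX_\bullet]$. Idempotent completion: $\widetilde{\mathcal C}$ has objects $(X,e)$ with $e\colon X\to X$ idempotent, morphisms $(e_Y,f,e_X)\colon(X,e_X)\to(Y,e_Y)$ with $fe_X=f=e_Yf$, composition $(e_Z,g,e_Y)(e_Y,f,e_X)=(e_Z,gf,e_X)$, identity $(e,e,e)$; for additive $\mathscr F$, $\widetilde{\mathscr F}(X,e)=(\mathscr FX,\mathscr Fe)$, $\widetilde{\mathscr F}(e_Y,f,e_X)=(\mathscr Fe_Y,\mathscr Ff,\mathscr Fe_X)$. The biadditive functor $\widetilde{\mathbb E}$ on $\widetilde{\mathcal C}$: $\widetilde{\mathbb E}((C,e_C),(A,e_A))=\{(e_A,\alpha,e_C)\mid\alpha\in\mathbb E(C,A),\ (e_A)_*\alpha=\alpha=(e_C)^*\alpha\}$ with addition in the middle component, and $\widetilde{\mathbb E}((e_C,d,e_D),(e_B,a,e_A))(e_A,\alpha,e_C)=(e_B,\mathbb E(d,a)(\alpha),e_D)$. The realisation $\widetilde{\mathfrak s}$: given $(e_A,\alpha,e_C)$, choose $X_\bullet$ with $\mathfrak s(\alpha)=[X_\bullet]$ (differentials $d_i$) and an idempotent morphism of complexes $e_\bullet\colon X_\bullet\to X_\bullet$ with $e_0=e_A$, $e_{n+1}=e_C$ (one exists, and the result is independent of choices); then $\widetilde{\mathfrak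 s}(e_A,\alpha,e_C)=[(X_\bullet,e_\bullet)]$, where $(X_\bullet,e_\bullet)$ is the complex in $\widetilde{\mathcal C}$ with terms $(X_i,e_i)$ and differentials $(e_{i+1},e_{i+1}d_i,e_i)$. Then $(\widetilde{\mathcal C},\widetilde{\mathbb E},\widetilde{\mathfrak s})$ is $n$-exangulated. Given $(\mathscr F,\Gamma)$, $\widetilde\Gamma$ is defined by $\widetilde\Gamma(e_A,\alpha,e_C)=(\mathscr Fe_A,\Gamma(\alpha),\mathscr Fe_C)$. *)

From Stdlib Require Import Arith Lia ProofIrrelevance.
Set Implicit Arguments.
Unset Strict Implicit.

Record AbGrp := AbGrp_mk {
  ab_car :> Type;
  ab0 : ab_car;
  abadd : ab_car -> ab_car -> ab_car;
  abopp : ab_car -> ab_car;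
  abaddA : forall x y z, abadd x (abadd y z) = abadd (abadd x y) z;
  abaddC : forall x y, abadd x y = abadd y x;
  abadd0 : forall x, abadd ab0 x = x;
  abaddN : forall x, abadd (abopp x) x = ab0 }.
Arguments ab0 {a}.
Arguments abadd {a}.
Arguments abopp {a}.

Definition ab_sub (G : AbGrp) (x y : G) : G := abadd x (abopp y).

Lemma sig_eq (A : Type) (P : A -> Prop) (x y : sig P) :
  proj1_sig x = proj1_sig y -> x = y.
Proof.
  destruct x as [x px], y as [y py]; simpl; intros ->.
  f_equal; apply proof_irrelevance.
Qed.

Definition subgrp (G : AbGrp) (P : G -> Prop) (H0 : P ab0)
  (Hadd : forall x y, P x -> P y -> P (abadd x y))
  (Hopp : forall x, P x -> P (abopp x)) : AbGrp.
Proof.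
  refine (@AbGrp_mk (sig P) (exist _ ab0 H0)
            (fun x y => exist _ (abadd (proj1_sig x) (proj1_sig y))
                           (Hadd _ _ (proj2_sig x) (proj2_sig y)))
            (fun x => exist _ (abopp (proj1_sig x)) (Hopp _ (proj2_sig x)))
            _ _ _ _);
  intros; apply sig_eq; simpl.
  - apply abaddA.
  - apply abaddC.
  - apply abadd0.
  - apply abaddN.
Defined.

Lemma ab_addr0 (G : AbGrp) (x : G) : abadd x ab0 = x.
Proof. rewrite abaddC; apply abadd0. Qed.

Lemma ab_idem0 (G : AbGrp) (x : G) : abadd x x = x -> x = ab0.
Proof.
  intro H. rewrite <- (abadd0 x), <- (abaddN x), <- abaddA, H. reflexivity.
Qed.

Lemma ab_inv_uniq (G : AbGrp) (x y : G) : abadd y x = ab0 -> y = abopp x.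
Proof.
  intro H. rewrite <- (ab_addr0 y), <- (abaddN x), abaddA, (abaddC y),
    <- abaddA, H, ab_addr0. reflexivity.
Qed.

Lemma addmap0 (G H : AbGrp) (phi : G -> H) :
  (forall x y, phi (abadd x y) = abadd (phi x) (phi y)) -> phi ab0 = ab0.
Proof. intro Hp. apply ab_idem0. rewrite <- Hp, abadd0. reflexivity. Qed.

Lemma addmapN (G H : AbGrp) (phi : G -> H) :
  (forall x y, phi (abadd x y) = abadd (phi x) (phi y)) ->
  forall x, phi (abopp x) = abopp (phi x).
Proof.
  intros Hp x. apply ab_inv_uniq. rewrite <- Hp, abaddN. apply (addmap0 Hp).
Qed.

Record PreAdd := PreAdd_mk {
  obj : Type;
  hom : obj -> obj -> AbGrp;
  comp : forall X Y Z, hom Y Z -> hom X Y -> hom X Z;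
  idm : forall X, hom X X;
  compA : forall X Y Z W (h : hom Z W) (g : hom Y Z) (f : hom X Y),
      comp h (comp g f) = comp (comp h g) f;
  comp1l : forall X Y (f : hom X Y), comp (idm Y) f = f;
  comp1r : forall X Y (f : hom X Y), comp f (idm X) = f;
  compDl : forall X Y Z (g g' : hom Y Z) (f : hom X Y),
      comp (abadd g g') f = abadd (comp g f) (comp g' f);
  compDr : forall X Y Z (g : hom Y Z) (f f' : hom X Y),
      comp g (abadd f f') = abadd (comp g f) (comp g f') }.
Arguments hom {p}.
Arguments comp {p X Y Z}.
Arguments idm {p}.

Definition heq (C : PreAdd) (x y a b : obj C) (f : hom x y) (g : hom a b) : Prop :=
  existT (fun p : obj C * obj C => ab_car (hom (fst p) (snd p))) (x, y) f
  = existT (fun p : obj C * obj C => ab_car (hom (fst p) (snd p))) (a, b) g.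

Section Additive.
Variable C : PreAdd.
Definition is_zero (Z : obj C) : Prop := idm Z = ab0.
Definition is_biprod (U V P : obj C) (i1 : hom U P) (i2 : hom V P)
  (p1 : hom P U) (p2 : hom P V) : Prop :=
  comp p1 i1 = idm U /\ comp p2 i2 = idm V /\ comp p1 i2 = ab0 /\
  comp p2 i1 = ab0 /\ abadd (comp i1 p1) (comp i2 p2) = idm P.
Definition is_additive : Prop :=
  (exists Z, is_zero Z) /\
  (forall U V, exists P i1 i2 p1 p2, @is_biprod U V P i1 i2 p1 p2).
End Additive.

(* ext X A = E(X,A); emap c a : E(X,A) -> E(Y,B) for c : Y -> X, a : A -> B *)
Record BiAdd (C : PreAdd) := BiAdd_mk {
  ext : obj C -> obj C -> AbGrp;
  emap : forall (X A Y B : obj C), hom Y X -> hom A B -> ext X A -> ext Y B;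
  emap_id : forall X A (x : ext X A), emap (idm X) (idm A) x = x;
  emap_comp : forall X A Y B Y' B' (c : hom Y X) (a : hom A B)
      (c' : hom Y' Y) (a' : hom B B') (x : ext X A),
      emap (comp c c') (comp a' a) x = emap c' a' (emap c a x);
  emap_addx : forall X A Y B (c : hom Y X) (a : hom A B) (x y : ext X A),
      emap c a (abadd x y) = abadd (emap c a x) (emap c a y);
  emap_addc : forall X A Y B (c c' : hom Y X) (a : hom A B) (x : ext X A),
      emap (abadd c c') a x = abadd (emap c a x) (emap c' a x);
  emap_adda : forall X A Y B (c : hom Y X) (a a' : hom A B) (x : ext X A),
      emap c (abadd a a') x = abadd (emap c a x) (emap c a' x) }.
Arguments ext {C} b.
Arguments emap {C} b {X A Y B}.

Definition pushf (C : PreAdd) (E : BiAdd C) (X A B : obj C) (a : hom A B)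
  (x : ext E X A) : ext E X B := emap E (idm X) a x.
Definition pullb (C : PreAdd) (E : BiAdd C) (X A Y : obj C) (c : hom Y X)
  (x : ext E X A) : ext E Y A := emap E c (idm A) x.

Definition eheq (C : PreAdd) (E : BiAdd C) (X A Y B : obj C)
  (x : ext E X A) (y : ext E Y B) : Prop :=
  existT (fun p : obj C * obj C => ab_car (ext E (fst p) (snd p))) (X, A) x
  = existT (fun p : obj C * obj C => ab_car (ext E (fst p) (snd p))) (Y, B) y.

(* ---------- complexes (indexed by nat; only indices 0..n+1 matter) ---------- *)
Record cplx (C : PreAdd) := cplx_mk {
  cobj : nat -> obj C;
  cdif : forall i, hom (cobj i) (cobj (S i)) }.
Arguments cobj {C}.
Arguments cdif {C}.

Definition cmor (C : PreAdd) (X Y : cplx C) := forall i, hom (cobj X i) (cobj Y i).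
Definition cmor_comp (C : PreAdd) (X Y Z : cplx C) (g : cmor Y Z) (f : cmor X Y)
  : cmor X Z := fun i => comp (g i) (f i).
Definition cmor_id (C : PreAdd) (X : cplx C) : cmor X X := fun i => idm (cobj X i).

Section NExang.
Variable n : nat.
Variable C : PreAdd.

Definition is_cplx (X : cplx C) : Prop :=
  forall i, i < n -> comp (cdif X (S i)) (cdif X i) = ab0.

Definition is_cmor (X Y : cplx C) (f : cmor X Y) : Prop :=
  forall i, i <= n -> comp (cdif Y i) (f i) = comp (f (S i)) (cdif X i).

(* homotopy, HLN: phi i = \varphi^{i+1} : X_{i+1} -> Y_i *)
Definition homotopic (X Y : cplx C) (f g : cmor X Y) : Prop :=
  exists phi : forall i, hom (cobj X (S i)) (cobj Y i),
    ab_sub (f 0) (g 0) = comp (phi 0) (cdif X 0) /\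
    (forall i, i < n -> ab_sub (f (S i)) (g (S i)) =
        abadd (comp (cdif Y i) (phi i)) (comp (phi (S i)) (cdif X (S i)))) /\
    ab_sub (f (S n)) (g (S n)) = comp (cdif Y n) (phi n).

Definition hequiv (X Y : cplx C) : Prop :=
  exists (f : cmor X Y) (g : cmor Y X),
    is_cmor f /\ is_cmor g /\
    heq (f 0) (idm (cobj X 0)) /\ heq (f (S n)) (idm (cobj X (S n))) /\
    heq (g 0) (idm (cobj Y 0)) /\ heq (g (S n)) (idm (cobj Y (S n))) /\
    homotopic (cmor_comp g f) (cmor_id X) /\ homotopic (cmor_comp f g) (cmor_id Y).

Variable E : BiAdd C.

(* a realisation: s X A d Y  means  Y belongs to the homotopy class s(d), d in E(X,A) *)
Definition Realisation := forall (X A : obj C), ext E X A -> cplx C -> Prop.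

Variable s : Realisation.

Definition is_realisation : Prop :=
  forall X A (d : ext E X A),
    (exists Y, s d Y) /\
    (forall Y, s d Y -> is_cplx Y /\ cobj Y 0 = A /\ cobj Y (S n) = X) /\
    (forall Y Y', s d Y -> is_cplx Y' -> cobj Y' 0 = A -> cobj Y' (S n) = X ->
       (s d Y' <-> hequiv Y Y')).

Definition nexangle (X : cplx C) (d : ext E (cobj X (S n)) (cobj X 0)) : Prop :=
  (forall W i (g : hom W (cobj X (S i))), i < n ->
     (comp (cdif X (S i)) g = ab0 <-> exists h : hom W (cobj X i), g = comp (cdif X i) h)) /\
  (forall W (g : hom W (cobj X (S n))),
     (pullb g d = ab0 <-> exists h : hom W (cobj X n), g = comp (cdif X n) h)) /\
  (forall W i (g : hom (cobj X (S i)) W), i < n ->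
     (comp g (cdif X i) = ab0 <->
        exists h : hom (cobj X (S (S i))) W, g = comp h (cdif X (S i)))) /\
  (forall W (g : hom (cobj X 0) W),
     (pushf g d = ab0 <-> exists h : hom (cobj X 1) W, g = comp h (cdif X 0))).

Definition R0 : Prop :=
  forall (X Y : cplx C) (dX : ext E (cobj X (S n)) (cobj X 0))
    (dY : ext E (cobj Y (S n)) (cobj Y 0))
    (a : hom (cobj X 0) (cobj Y 0)) (c : hom (cobj X (S n)) (cobj Y (S n))),
    pushf a dX = pullb c dY -> s dX X -> s dY Y ->
    exists f : cmor X Y, is_cmor f /\ f 0 = a /\ f (S n) = c.

Definition R1 : Prop :=
  forall (X : cplx C) (d : ext E (cobj X (S n)) (cobj X 0)), s d X -> nexangle d.

Definition R2 : Prop :=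
  forall (A Z : obj C), is_zero Z ->
    (forall X : cplx C, heq (cdif X 0) (idm A) ->
       (forall i, 1 < i <= S n -> cobj X i = Z) -> s (ab0 : ext E Z A) X) /\
    (forall X : cplx C, heq (cdif X n) (idm A) ->
       (forall i, i < n -> cobj X i = Z) -> s (ab0 : ext E A Z) X).

Definition inflation (A B : obj C) (f : hom A B) : Prop :=
  exists (X : cplx C) (d : ext E (cobj X (S n)) (cobj X 0)), s d X /\ heq (cdif X 0) f.
Definition deflation (A B : obj C) (f : hom A B) : Prop :=
  exists (X : cplx C) (d : ext E (cobj X (S n)) (cobj X 0)), s d X /\ heq (cdif X n) f.

Definition EA1 : Prop :=
  (forall (A B D : obj C) (f : hom A B) (g : hom B D),
      inflation f -> inflation g -> inflation (comp g f)) /\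
  (forall (A B D : obj C) (f : hom A B) (g : hom B D),
      deflation f -> deflation g -> deflation (comp g f)).

(* M is (a choice of) the mapping cone M_f of f : X -> Y (with f_0 = 1):
   X_1 -> X_2 (+) Y_1 -> ... -> X_{n+1} (+) Y_n -> Y_{n+1} *)
Definition is_cone (X Y : cplx C) (f : cmor X Y) (M : cplx C) : Prop :=
  exists (iX : forall i, hom (cobj X (S i)) (cobj M i))
         (pX : forall i, hom (cobj M i) (cobj X (S i)))
         (iY : forall i, hom (cobj Y i) (cobj M i))
         (pY : forall i, hom (cobj M i) (cobj Y i)),
    (forall i, 1 <= i <= n -> is_biprod (iX i) (iY i) (pX i) (pY i)) /\
    heq (cdif M 0) (abadd (comp (iX 1) (abopp (cdif X 1))) (comp (iY 1) (f 1))) /\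
    (forall i, 1 <= i < n ->
       cdif M i = abadd (comp (iX (S i)) (comp (abopp (cdif X (S i))) (pX i)))
                        (comp (iY (S i)) (abadd (comp (f (S i)) (pX i))
                                                (comp (cdif Y i) (pY i))))) /\
    heq (cdif M n) (abadd (comp (f (S n)) (pX n)) (comp (cdif Y n) (pY n))).

(* M is (a choice of) the mapping cocone M^g of g : X -> Y (with g_{n+1} = 1):
   X_0 -> X_1 (+) Y_0 -> ... -> X_n (+) Y_{n-1} -> Y_n ;
   here M_{j+1} = X_{j+1} (+) Y_j for j < n *)
Definition is_cocone (X Y : cplx C) (g : cmor X Y) (M : cplx C) : Prop :=
  exists (iX : forall j, hom (cobj X (S j)) (cobj M (S j)))
         (pX : forall j, hom (cobj M (S j)) (cobj X (S j)))
         (iY : forall j, hom (cobj Y j) (cobj M (S j)))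
         (pY : forall j, hom (cobj M (S j)) (cobj Y j)),
    (forall j, j < n -> is_biprod (iX j) (iY j) (pX j) (pY j)) /\
    heq (cdif M 0) (abadd (comp (iX 0) (abopp (cdif X 0))) (comp (iY 0) (g 0))) /\
    (forall j, S j < n ->
       cdif M (S j) = abadd (comp (iX (S j)) (comp (abopp (cdif X (S j))) (pX j)))
                            (comp (iY (S j)) (abadd (comp (g (S j)) (pX j))
                                                    (comp (cdif Y j) (pY j))))) /\
    heq (cdif M n) (abadd (comp (g (S (pred n))) (pX (pred n)))
                          (comp (cdif Y (pred n)) (pY (pred n)))).

(* (EA2): d = dY in E(D,A), c : C -> D, <X, c^* d> and <Y, d> distinguished;
   then (1_A, c) has a good lift f: <M_f, (d_X^0)_* d> is distinguished *)
Definition EA2 : Prop :=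
  forall (X Y : cplx C) (dX : ext E (cobj X (S n)) (cobj X 0))
    (dY : ext E (cobj Y (S n)) (cobj Y 0)) (c : hom (cobj X (S n)) (cobj Y (S n))),
    eheq dX (pullb c dY) -> s dX X -> s dY Y ->
    exists f : cmor X Y, is_cmor f /\ heq (f 0) (idm (cobj X 0)) /\ f (S n) = c /\
      exists M, is_cone f M /\
        forall a : hom (cobj Y 0) (cobj X 1), heq a (cdif X 0) -> s (pushf a dY) M.

(* (EA2^op): d = dX in E(D,A), a : A -> B, <X, d> and <Y, a_* d> distinguished;
   then (a, 1_D) has a good lift g: <M^g, (d_Y^n)^* d> is distinguished *)
Definition EA2op : Prop :=
  forall (X Y : cplx C) (dX : ext E (cobj X (S n)) (cobj X 0))
    (dY : ext E (cobj Y (S n)) (cobj Y 0)) (a : hom (cobj X 0) (cobj Y 0)),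
    eheq dY (pushf a dX) -> s dX X -> s dY Y ->
    exists g : cmor X Y, is_cmor g /\ g 0 = a /\ heq (g (S n)) (idm (cobj X (S n))) /\
      exists M, is_cocone g M /\
        forall c : hom (cobj Y n) (cobj X (S n)), heq c (cdif Y n) -> s (pullb c dX) M.

Record nexangulated : Prop := {
  nex_n : 1 <= n;
  nex_additive : is_additive C;
  nex_real : is_realisation;
  nex_R0 : R0;
  nex_R1 : R1;
  nex_R2 : R2;
  nex_EA1 : EA1;
  nex_EA2 : EA2;
  nex_EA2op : EA2op }.
End NExang.

Record AFun (C D : PreAdd) := AFun_mk {
  fobj : obj C -> obj D;
  fmap : forall X Y, hom X Y -> hom (fobj X) (fobj Y) }.
Arguments fobj {C D}.
Arguments fmap {C D} _ {X Y}.

Record is_add_fun (C D : PreAdd) (F : AFun C D) : Prop := {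
  af_id : forall X, fmap F (idm X) = idm (fobj F X);
  af_comp : forall X Y Z (g : hom Y Z) (f : hom X Y),
      fmap F (comp g f) = comp (fmap F g) (fmap F f);
  af_add : forall X Y (f g : hom X Y), fmap F (abadd f g) = abadd (fmap F f) (fmap F g) }.

Definition NatT (C D : PreAdd) (E : BiAdd C) (F : BiAdd D) (Fu : AFun C D) :=
  forall (X A : obj C), ext E X A -> ext F (fobj Fu X) (fobj Fu A).

Record is_nat (C D : PreAdd) (E : BiAdd C) (F : BiAdd D) (Fu : AFun C D)
  (G : NatT E F Fu) : Prop := {
  nt_add : forall X A (x y : ext E X A), G X A (abadd x y) = abadd (G X A x) (G X A y);
  nt_nat : forall X A Y B (c : hom Y X) (a : hom A B) (x : ext E X A),
      G Y B (emap E c a x) = emap F (fmap Fu c) (fmap Fu a) (G X A x) }.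

Definition fcplx (C D : PreAdd) (F : AFun C D) (X : cplx C) : cplx D :=
  {| cobj := fun i => fobj F (cobj X i); cdif := fun i => fmap F (cdif X i) |}.

Record is_exfun (n : nat) (C : PreAdd) (E : BiAdd C) (s : Realisation E)
  (D : PreAdd) (F : BiAdd D) (t : Realisation F) (Fu : AFun C D) (G : NatT E F Fu)
  : Prop := {
  exf_add : is_add_fun Fu;
  exf_nat : is_nat G;
  exf_real : forall X A (d : ext E X A) (Y : cplx C), s X A d Y -> t _ _ (G X A d) (fcplx Fu Y) }.

Record iobj (C : PreAdd) := iobj_mk {
  io : obj C;
  ie : hom io io;
  ie_idem : comp ie ie = ie }.
Arguments io {C}.
Arguments ie {C}.
Arguments ie_idem {C}.

Section Tilde.
Variable C : PreAdd.

Lemma comp0l (X Y Z : obj C) (f : hom X Y) : comp (ab0 : hom Y Z) f = ab0.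
Proof. apply (addmap0 (phi := fun g : hom Y Z => comp g f)); intros; apply compDl. Qed.
Lemma comp0r (X Y Z : obj C) (g : hom Y Z) : comp g (ab0 : hom X Y) = ab0.
Proof. apply (addmap0 (phi := fun f : hom X Y => comp g f)); intros; apply compDr. Qed.
Lemma compNl (X Y Z : obj C) (g : hom Y Z) (f : hom X Y) : comp (abopp g) f = abopp (comp g f).
Proof. apply (addmapN (phi := fun g : hom Y Z => comp g f)); intros; apply compDl. Qed.
Lemma compNr (X Y Z : obj C) (g : hom Y Z) (f : hom X Y) : comp g (abopp f) = abopp (comp g f).
Proof. apply (addmapN (phi := fun f : hom X Y => comp g f)); intros; apply compDr. Qed.

Definition ihomP (X Y : iobj C) (f : hom (io X) (io Y)) : Prop :=
  comp f (ie X) = f /\ comp (ie Y) f = f.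

Definition ihom (X Y : iobj C) : AbGrp.
Proof.
  refine (@subgrp (hom (io X) (io Y)) (@ihomP X Y) _ _ _).
  - split; [apply comp0l | apply comp0r].
  - intros f g [H1 H2] [H3 H4]; split;
      [rewrite compDl, H1, H3 | rewrite compDr, H2, H4]; reflexivity.
  - intros f [H1 H2]; split; [rewrite compNl, H1 | rewrite compNr, H2]; reflexivity.
Defined.

Definition icomp (X Y Z : iobj C) (g : ihom Y Z) (f : ihom X Y) : ihom X Z.
Proof.
  refine (exist _ (comp (proj1_sig g) (proj1_sig f)) _).
  destruct g as [g [Hg1 Hg2]], f as [f [Hf1 Hf2]]; simpl; split.
  - rewrite <- compA, Hf1; reflexivity.
  - rewrite compA, Hg2; reflexivity.
Defined.

Definition iid (X : iobj C) : ihom X X :=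
  exist _ (ie X) (conj (ie_idem X) (ie_idem X)).

Definition tildeC : PreAdd.
Proof.
  refine (@PreAdd_mk (iobj C) ihom icomp iid _ _ _ _ _); intros; apply sig_eq; simpl.
  - apply compA.
  - destruct f as [f [H1 H2]]; exact H2.
  - destruct f as [f [H1 H2]]; exact H1.
  - apply compDl.
  - apply compDr.
Defined.

Variable E : BiAdd C.

Definition iextP (X A : iobj C) (x : ext E (io X) (io A)) : Prop :=
  pushf (ie A) x = x /\ pullb (ie X) x = x.

Lemma emap_push (X A Y B : obj C) (c : hom Y X) (a : hom A B) (b : hom B B)
  (x : ext E X A) : pushf b (emap E c a x) = emap E c (comp b a) x.
Proof. unfold pushf. rewrite <- emap_comp, comp1r. reflexivity. Qed.
Lemma emap_pull (X A Y B : obj C) (c : hom Y X) (a : hom A B) (y : hom Y Y)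
  (x : ext E X A) : pullb y (emap E c a x) = emap E (comp c y) a x.
Proof. unfold pullb. rewrite <- emap_comp, comp1l. reflexivity. Qed.

Definition iext (X A : iobj C) : AbGrp.
Proof.
  refine (@subgrp (ext E (io X) (io A)) (@iextP X A) _ _ _).
  - unfold iextP, pushf, pullb; split; apply (addmap0 (phi := emap E _ _)); intros; apply emap_addx.
  - unfold iextP, pushf, pullb; intros x y [H1 H2] [H3 H4]; split;
      rewrite emap_addx; congruence.
  - unfold iextP, pushf, pullb; intros x [H1 H2]; split;
      rewrite (addmapN (phi := emap E _ _)); try congruence; intros; apply emap_addx.
Defined.

Definition iemap (X A Y B : iobj C) (c : ihom Y X) (a : ihom A B) (x : iext X A)
  : iext Y B.
Proof.
  refine (exist _ (emap E (proj1_sig c) (proj1_sig a) (proj1_sig x)) _).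
  destruct c as [c [Hc1 Hc2]], a as [a [Ha1 Ha2]]; simpl; split.
  - rewrite emap_push, Ha2; reflexivity.
  - rewrite emap_pull, Hc1; reflexivity.
Defined.

Definition tildeE : BiAdd tildeC.
Proof.
  refine (@BiAdd_mk tildeC iext iemap _ _ _ _ _); intros; apply sig_eq; simpl.
  - destruct x as [x [H1 H2]]; simpl.
    transitivity (pullb (ie X) (pushf (ie A) x)).
    + unfold pullb, pushf; rewrite <- emap_comp, !comp1l; reflexivity.
    + rewrite H1; exact H2.
  - apply emap_comp.
  - apply emap_addx.
  - apply emap_addc.
  - apply emap_adda.
Defined.

Variable n : nat.
Variable s : Realisation E.

Definition icplx (X : cplx C) (e : cmor X X) (He : forall i, comp (e i) (e i) = e i)
  : cplx tildeC.
Proof.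
  refine (@cplx_mk tildeC (fun i => (iobj_mk (He i) : obj tildeC))
            (fun i => (exist _ (comp (e (S i)) (comp (cdif X i) (e i))) _
                       : hom (iobj_mk (He i) : obj tildeC) (iobj_mk (He (S i)) : obj tildeC)))).
  unfold ihomP; simpl; split.
  - rewrite <- !compA, (He i); reflexivity.
  - rewrite !compA, (He (S i)); reflexivity.
Defined.

(* tilde s : (e_A, x, e_X) is realised by the class of (X_., e_.) *)
Definition tildeS : Realisation tildeE :=
  fun (X A : iobj C) (x : iext X A) (Y : cplx tildeC) =>
    exists (Z : cplx C) (e : cmor Z Z) (He : forall i, comp (e i) (e i) = e i),
      s (proj1_sig x) Z /\ is_cmor n e /\
      heq (e 0) (ie A) /\ heq (e (S n)) (ie X) /\
      is_cplx n Y /\ cobj Y 0 = A /\ cobj Y (S n) = X /\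
      hequiv n (icplx He) Y.
End Tilde.

Section TildeFun.
Variables (C D : PreAdd) (E : BiAdd C) (F : BiAdd D) (Fu : AFun C D).
Hypothesis HF : is_add_fun Fu.

Definition tildeF_obj (X : iobj C) : iobj D.
Proof.
  refine (@iobj_mk D (fobj Fu (io X)) (fmap Fu (ie X)) _).
  rewrite <- af_comp, ie_idem; auto.
Defined.

Definition tildeF_map (X Y : iobj C) (f : ihom X Y) : ihom (tildeF_obj X) (tildeF_obj Y).
Proof.
  refine (exist _ (fmap Fu (proj1_sig f)) _).
  destruct f as [f [H1 H2]]; unfold ihomP; simpl; split; rewrite <- (af_comp HF); congruence.
Defined.

Definition tildeF : AFun (tildeC C) (tildeC D) :=
  @AFun_mk (tildeC C) (tildeC D) tildeF_obj tildeF_map.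

Variable G : NatT E F Fu.
Hypothesis HG : is_nat G.

Definition tildeG : NatT (tildeE E) (tildeE F) tildeF.
Proof.
  intros X A x.
  refine (exist _ (@G _ _ (proj1_sig x)) _).
  destruct x as [x [H1 H2]]; unfold iextP, tildeF_obj, pushf, pullb in *; simpl in *; split.
  - rewrite <- (af_id HF (io X)), <- (nt_nat HG), H1; reflexivity.
  - rewrite <- (af_id HF (io A)), <- (nt_nat HG), H2; reflexivity.
Defined.
End TildeFun.

(* The completion of (F, Gamma) acts on the underlying data of C exactly as (F, Gamma)
   does, so additivity and naturality are inherited verbatim.  A complex realising
   (e_A, d, e_X) in the completion is, up to homotopy equivalence, a complex (X, e)
   built from a realisation X of d and an idempotent lift e of (e_A, e_X).  An additive
   functor preserves complexes, morphisms of complexes, idempotents, homotopies and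
   homotopy equivalences, and sends (X, e) to (F X, F e), where F X realises Gamma(d)
   because (F, Gamma) is exangulated. *)
From Stdlib Require Import FunctionalExtensionality.
Set Implicit Arguments.
Unset Strict Implicit.

Section AdditiveFunctor.
Variables (n : nat) (C D : PreAdd) (F : AFun C D).

Lemma heq_fmap (x y a b : obj C) (f : hom x y) (g : hom a b) :
  heq f g -> heq (fmap F f) (fmap F g).
Proof.
  unfold heq; intro H.
  apply (f_equal (fun s : {p : obj C * obj C & ab_car (hom (fst p) (snd p))} =>
    match s with existT _ p h =>
      existT (fun q : obj D * obj D => ab_car (hom (fst q) (snd q)))
        (fobj F (fst p), fobj F (snd p)) (fmap F h) end)) in H.
  exact H.
Qed.

Definition fcmor (X Y : cplx C) (f : cmor X Y) : cmor (fcplx F X) (fcplx F Y) :=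
  fun i => fmap F (f i).

Hypothesis HF : is_add_fun F.

Lemma fmap0 (X Y : obj C) : fmap F (ab0 : hom X Y) = ab0.
Proof. apply (addmap0 (phi := fun f : hom X Y => fmap F f)), (af_add HF). Qed.

Lemma fmap_sub (X Y : obj C) (f g : hom X Y) :
  fmap F (ab_sub f g) = ab_sub (fmap F f) (fmap F g).
Proof.
  unfold ab_sub.
  rewrite (af_add HF), (addmapN (phi := fun f : hom X Y => fmap F f)) by apply (af_add HF).
  reflexivity.
Qed.

Lemma heq_fmap_idm (x y a : obj C) (f : hom x y) :
  heq f (idm a) -> heq (fmap F f) (idm (fobj F a)).
Proof. rewrite <- (af_id HF); apply heq_fmap. Qed.

Lemma fcmor_comp (X Y Z : cplx C) (g : cmor Y Z) (f : cmor X Y) :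
  cmor_comp (fcmor g) (fcmor f) = fcmor (cmor_comp g f).
Proof. extensionality i; symmetry; apply (af_comp HF). Qed.

Lemma fcmor_id (X : cplx C) : cmor_id (fcplx F X) = fcmor (cmor_id X).
Proof. extensionality i; symmetry; apply (af_id HF). Qed.

Lemma is_cplx_fcplx (X : cplx C) : is_cplx n X -> is_cplx n (fcplx F X).
Proof. intros H i Hi; simpl; rewrite <- (af_comp HF), H by exact Hi; apply fmap0. Qed.

Lemma is_cmor_fcmor (X Y : cplx C) (f : cmor X Y) : is_cmor n f -> is_cmor n (fcmor f).
Proof. intros H i Hi; unfold fcmor; simpl; rewrite <- !(af_comp HF), H by exact Hi; reflexivity. Qed.

Lemma homotopic_fcmor (X Y : cplx C) (f g : cmor X Y) :
  homotopic n f g -> homotopic n (fcmor f) (fcmor g).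
Proof.
  intros [phi [H0 [Hmid Hlast]]].
  exists (fun i => fmap F (phi i)); unfold fcmor; simpl; split; [|split].
  - rewrite <- fmap_sub, H0; apply (af_comp HF).
  - intros i Hi; rewrite <- fmap_sub, Hmid by exact Hi.
    rewrite (af_add HF), !(af_comp HF); reflexivity.
  - rewrite <- fmap_sub, Hlast; apply (af_comp HF).
Qed.

Lemma hequiv_fcplx (X Y : cplx C) : hequiv n X Y -> hequiv n (fcplx F X) (fcplx F Y).
Proof.
  intros [f [g [Hf [Hg [Hf0 [Hfn [Hg0 [Hgn [Hgf Hfg]]]]]]]]].
  exists (fcmor f), (fcmor g).
  rewrite !fcmor_comp, !fcmor_id.
  repeat split;
    solve [ apply is_cmor_fcmor; assumption
          | apply heq_fmap_idm; assumption
          | apply homotopic_fcmor; assumption ].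
Qed.
End AdditiveFunctor.

Section TildeFunctor.
Variables (C D : PreAdd) (E : BiAdd C) (F : BiAdd D) (Fu : AFun C D).
Hypothesis HF : is_add_fun Fu.

Lemma tildeF_add : is_add_fun (tildeF HF).
Proof.
  split; intros; apply sig_eq; simpl.
  - reflexivity.
  - apply (af_comp HF).
  - apply (af_add HF).
Qed.

Lemma tildeG_nat (G : NatT E F Fu) (HG : is_nat G) : is_nat (tildeG HF HG).
Proof. split; intros; apply sig_eq; [apply (nt_add HG) | apply (nt_nat HG)]. Qed.

(* Transparent, so that the terms of [icplx (fcmor_idem He)] are definitionally the
   objects [tildeF_obj HF _]. *)
Definition fcmor_idem (Z : cplx C) (e : cmor Z Z) (He : forall i, comp (e i) (e i) = e i)
  : forall i, comp (fcmor Fu e i) (fcmor Fu e i) = fcmor Fu e i :=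
  fun i => ie_idem (tildeF_obj HF (iobj_mk (He i))).

Lemma fcplx_icplx (Z : cplx C) (e : cmor Z Z) (He : forall i, comp (e i) (e i) = e i) :
  fcplx (tildeF HF) (icplx He) = icplx (fcmor_idem He).
Proof.
  unfold icplx, fcplx; simpl; f_equal; extensionality i.
  apply sig_eq; simpl; unfold fcmor; rewrite !(af_comp HF); reflexivity.
Qed.

Lemma tildeS_fcplx (n : nat) (s : Realisation E) (t : Realisation F)
  (G : NatT E F Fu) (HG : is_nat G) :
  (forall X A (d : ext E X A) (Z : cplx C), s X A d Z -> t _ _ (G X A d) (fcplx Fu Z)) ->
  forall (X A : obj (tildeC C)) (x : ext (tildeE E) X A) (Y : cplx (tildeC C)),
    tildeS n s x Y -> tildeS n t (tildeG HF HG x) (fcplx (tildeF HF) Y).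
Proof.
  intros Hreal X A x Y [Z [e [He [Hs [He_cmor [He0 [Hen [HY [HY0 [HYn Hequiv]]]]]]]]]].
  exists (fcplx Fu Z), (fcmor Fu e), (fcmor_idem He).
  rewrite <- fcplx_icplx.
  repeat split.
  - exact (Hreal _ _ _ _ Hs).
  - exact (is_cmor_fcmor HF He_cmor).
  - exact (heq_fmap Fu He0).
  - exact (heq_fmap Fu Hen).
  - exact (is_cplx_fcplx tildeF_add HY).
  - simpl; rewrite HY0; reflexivity.
  - simpl; rewrite HYn; reflexivity.
  - exact (hequiv_fcplx tildeF_add Hequiv).
Qed.
End TildeFunctor.

Theorem lemma3p6 (n : nat)
  (C : PreAdd) (E : BiAdd C) (s : Realisation E)
  (D : PreAdd) (F : BiAdd D) (t : Realisation F)
  (Fu : AFun C D) (G : NatT E F Fu)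
  (HC : nexangulated n s) (HD : nexangulated n t)
  (HFG : is_exfun n s t G) :
  is_exfun n (tildeS n s) (tildeS n t)
    (tildeG (exf_add HFG) (exf_nat HFG)).
Proof.
  split.
  - apply tildeF_add.
  - apply tildeG_nat.
  - apply tildeS_fcplx, (exf_real HFG).
Qed.
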